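(* Every open subspace of a $C$-selective space is $C$-selective.
   Context: All spaces are assumed $T_1$. For spaces $Y$, $X$, a map $\varphi:Y\to\mathcal P(X)\setminus\{\emptyset\}$ is lower semicontinuous (l.s.c.) if $\{y:\varphi(y)\cap U\neq\emptyset\}$ is open in $Y$ for every open $U\subseteq X$; a selection is a map $f:Y\to X$ with $f(y)\in\varphi(y)$ for all $y$. $X$ is $Y$-selective if every l.s.c. map from $Y$ to the nonempty closed subsets of $X$ has a continuous selection; $X$ is $C$-selective if it is $Y$-selective for every countable regular space $Y$. *)

From HB Require Import structures.
From mathcomp Require Import all_boot all_order all_algebra.
From mathcomp Require Import all_classical all_reals all_analysis.
Set Implicit Arguments. Unset Strict Implicit. Unset Printing Implicit Defensive.
Local Open Scope classical_set_scope.

Definition lsc {Y X : topologicalType} (phi : Y -> set X) : Prop :=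
  forall U : set X, open U -> open [set y | phi y `&` U !=set0].

Definition selective (Y X : topologicalType) : Prop :=
  forall phi : Y -> set X,
    (forall y, closed (phi y) /\ phi y !=set0) -> lsc phi ->
    exists f : Y -> X, continuous f /\ forall y, phi y (f y).

Definition C_selective (X : topologicalType) : Prop :=
  forall Y : topologicalType,
    countable [set: Y] -> @accessible_space Y -> @regular_space Y ->
    selective Y X.

From HB Require Import structures.
From mathcomp Require Import all_boot all_order all_algebra.
From mathcomp Require Import all_classical all_reals all_analysis.
Local Open Scope classical_set_scope.

(** Countable regular spaces have a base of clopen sets: for y in an open W,
    enumerate the space and grow two increasing sequences of open sets with
    disjoint closures, the first one containing y and with closure inside W,
    absorbing the n-th point into one of them at step n; the two unions are
    complementary open sets.

    Let phi be l.s.c. from a countable regular Y to the nonempty closed subsets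
    of the open subspace U. For each point y_n of an enumeration of Y pick a_n
    in phi y_n and select, in X, the l.s.c. map equal to {a_n} at y_n and to the
    closure of phi y elsewhere. The selection g_n lies in U on a clopen
    neighbourhood C_n of y_n, and there it selects phi because phi y is closed
    in U. Using g_n on the points whose first covering set is C_n glues these
    maps into a continuous selection of phi. *)

Lemma countable_enum {Y : Type} (y0 : Y) : countable [set: Y] ->
  exists e : nat -> Y, forall y, exists n, e n = y.
Proof.
case/ocard_geP => g; exists (fun n => odflt y0 (g n)) => y.
by have [n _ gn] := 'surj_g (imageT _ y); exists n; rewrite gn.
Qed.

Lemma closure_image_open_neq0 (S X : topologicalType) (h : S -> X) (A : set S)
    (V : set X) : open V ->
  closure (h @` A) `&` V !=set0 <-> A `&` h @^-1` V !=set0.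
Proof.
move=> oV; split => [[x [clx Vx]]|[a [Aa Vha]]]; last first.
  by exists (h a); split => //; apply: subset_closure; exists a.
have /clx [_ [[a Aa <-] Vha]] : nbhs x V by exact: open_nbhs_nbhs.
by exists a.
Qed.

Lemma lsc_closure_image (Y S X : topologicalType) (h : S -> X) (phi : Y -> set S) :
  continuous h -> lsc phi -> lsc (fun y => closure (h @` phi y)).
Proof.
move=> ch lphi V oV.
rewrite (_ : [set y | _] = [set y | phi y `&` h @^-1` V !=set0]).
  by apply: lphi; exact: open_comp.
by apply/seteqP; split => y /closure_image_open_neq0 => /(_ oV).
Qed.

Lemma lsc_update_set1 (Y X : topologicalType) (phi : Y -> set X) (y0 : Y) (x0 : X) :
  accessible_space Y -> phi y0 x0 -> lsc phi ->
  lsc (fun y => if y == y0 then [set x0] else phi y).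
Proof.
move=> T1Y phix0 lphi V oV.
have [Vx0|nVx0] := pselect (V x0).
  rewrite (_ : [set y | _] = [set y | phi y `&` V !=set0]); first exact: lphi.
  by apply/seteqP; split => y /=; case: eqP => [-> _|//]; exists x0.
rewrite (_ : [set y | _] = [set y | phi y `&` V !=set0] `&` ~` [set y0]).
  by apply: openI; [exact: lphi | exact/closed_openC/accessible_closed_set1].
apply/seteqP; split => y /=; case: eqP => [->|ne].
- by case=> x [-> /nVx0].
- by [].
- by case=> _ /(_ erefl).
- by case.
Qed.

Lemma closure_val_subspace (X : topologicalType) (U : set X)
    (A : set (set_type U)) (x : set_type U) :
  closed A -> closure (val @` A) (val x) -> A x.
Proof.
move=> cA clx; apply: contrapT => nAx.
have [V oV VE] : open (~` A) by rewrite openC.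
have Vx : V (val x) by have : (~` A) x by []; rewrite -VE.
have /clx [_ [[b Ab <-] Vb]] : nbhs (val x) V by exact: open_nbhs_nbhs.
by have : (~` A) b by rewrite -VE.
Qed.

Section CountableRegular.
Context {Y : topologicalType} (regY : regular_space Y).

Lemma regular_closure_nbhs {V : set Y} {z : Y} : open V -> V z ->
  exists N, [/\ open N, N z & closure N `<=` V].
Proof.
move=> oV Vz.
have [A zA clAV] := regY z V (open_nbhs_nbhs (conj oV Vz)).
exists A°; split; [exact: open_interior | exact: zA | ].
by apply: subset_trans clAV; apply: closureS; exact: interior_subset.
Qed.

Variable W : set Y.
Hypothesis oW : open W.

Definition separating_pair (p : set Y * set Y) :=
  [/\ open p.1, open p.2, closure p.1 `<=` W & closure p.1 `&` closure p.2 = set0].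

Lemma separating_pair_absorb p z : separating_pair p ->
  exists q, [/\ separating_pair q, p.1 `<=` q.1, p.2 `<=` q.2 & q.1 z \/ q.2 z].
Proof.
case: p => S T [/= oS oT clSW clST].
have [clSz|nclSz] := pselect (closure S z).
- have nclTz : ~ closure T z.
    by move=> clTz; have : (closure S `&` closure T) z by []; rewrite clST.
  have [N [oN Nz clN]] := regular_closure_nbhs
    (openI oW (closed_openC (@closed_closure _ T))) (conj (clSW _ clSz) nclTz).
  exists (S `|` N, T); split => /=; [split => //=|exact: subsetUl|by []|by left; right].
  + exact: openU.
  + by rewrite closureU => x [/clSW|/clN []].
  + by rewrite closureU setIUl clST set0U; apply/disjoints_subset => x /clN [].
- have [N [oN Nz clN]] := regular_closure_nbhs
    (closed_openC (@closed_closure _ S)) nclSz.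
  exists (S, T `|` N); split => /=; [split => //=|by []|exact: subsetUl|by right; right].
  + exact: openU.
  + by rewrite closureU setIUr clST set0U setIC; apply/disjoints_subset.
Qed.

Lemma separating_chain (e : nat -> Y) p0 : separating_pair p0 ->
  exists s : nat -> set Y * set Y, s 0%N = p0 /\ forall n,
    [/\ separating_pair (s n), (s n).1 `<=` (s n.+1).1, (s n).2 `<=` (s n.+1).2
      & (s n.+1).1 (e n) \/ (s n.+1).2 (e n)].
Proof.
move=> sep0.
have /choice [next nextP] : forall np : nat * (set Y * set Y), exists q,
    separating_pair np.2 -> [/\ separating_pair q, np.2.1 `<=` q.1,
      np.2.2 `<=` q.2 & q.1 (e np.1) \/ q.2 (e np.1)].
  move=> [n p]; have [sep|] := pselect (separating_pair p); last by exists p.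
  by have [q] := separating_pair_absorb _ (e n) sep; exists q.
pose s := fix s n := if n is m.+1 then next (m, s m) else p0.
have sep n : separating_pair (s n).
  by elim: n => //= n IH; case: (nextP (n, s n) IH).
by exists s; split => // n; have [] := nextP (n, s n) (sep n).
Qed.

End CountableRegular.

Definition clopen_base (Y : topologicalType) :=
  forall (W : set Y) y, open W -> W y -> exists C, [/\ clopen C, C y & C `<=` W].

Lemma countable_regular_clopen_base {Y : topologicalType} :
  countable [set: Y] -> regular_space Y -> clopen_base Y.
Proof.
move=> cY regY W y oW Wy.
have [e eS] := countable_enum y cY.
have [V0 [oV0 V0y clV0W]] := regular_closure_nbhs regY oW Wy.
have sep0 : separating_pair W (V0, set0).
  by split => //=; [exact: open0 | rewrite closure0 setI0].
have [s [s0 sP]] := separating_chain regY W oW e _ sep0.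
have [mono1 mono2] : {homo fst \o s : m n / (m <= n)%N >-> m `<=` n} /\
                     {homo snd \o s : m n / (m <= n)%N >-> m `<=` n}.
  by split; apply: homo_leq => [|? ? ?|n];
    do ?[exact: subset_refl | exact: subset_trans | case: (sP n)].
pose O := \bigcup_n (s n).1; pose Q := \bigcup_n (s n).2.
have oO : open O by apply: bigcup_open => n _; case: (sP n) => [[]].
have oQ : open Q by apply: bigcup_open => n _; case: (sP n) => [[]].
have OQ : O = ~` Q.
  apply/seteqP; split => x.
    move=> [m _ Ox] [k _ Qx].
    have [[_ _ _ clst] _ _ _] := sP (maxn m k).
    suff : (closure (s (maxn m k)).1 `&` closure (s (maxn m k)).2) x by rewrite clst.
    by split; apply: subset_closure;
      [exact: (mono1 _ _ (leq_maxl m k)) | exact: (mono2 _ _ (leq_maxr m k))].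
  have [n <-] := eS x; move=> nQx.
  by have [_ _ _ [Oe|Qe]] := sP n; [exists n.+1 | case: nQx; exists n.+1].
exists O; split.
- by split; rewrite // OQ; exact: open_closedC.
- by exists 0%N; rewrite // s0.
- by move=> x [n _ /subset_closure]; have [[_ _ clW _] _ _ _] := sP n; apply: clW.
Qed.


Section FirstCover.
Context {Y : topologicalType} (C : nat -> set Y).

Definition first_cover (m : nat) : set Y := C m `&` ~` \bigcup_(j in `I_m) C j.

Lemma first_cover_exists n y : C n y -> exists m, first_cover m y.
Proof.
move=> Cny; have [|m /asboolP Cmy minm] := ex_minnP (P := fun n => `[< C n y >]).
  by exists n; exact/asboolP.
exists m; split => // -[j /= jm Cjy].
by have := minm j (asboolT Cjy); rewrite leqNgt jm.
Qed.

Lemma first_cover_uniq {m n y} : first_cover m y -> first_cover n y -> m = n.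
Proof.
move=> [Cmy nCy] [Cny nCy']; case: (ltngtP m n) => // mn.
- by case: nCy'; exists m.
- by case: nCy; exists n.
Qed.

Hypothesis clopen_cover : forall n, clopen (C n).

Lemma clopen_first_cover m : clopen (first_cover m).
Proof.
have [oC clC] : clopen (\bigcup_(j in `I_m) C j).
  split; first by apply: bigcup_open => j _; case: (clopen_cover j).
  by apply: closed_bigcup => [|j _]; [exact: finite_II | case: (clopen_cover j)].
by apply: clopenI => //; split; [exact: closed_openC | exact: open_closedC].
Qed.

Lemma continuous_first_cover_glue (X : topologicalType) (g : nat -> Y -> X)
    (f : Y -> X) :
  (forall n, continuous (g n)) -> (forall y, exists n, C n y) ->
  (forall m y, first_cover m y -> f y = g m y) -> continuous f.
Proof.
move=> cg cover fg y; have [n /first_cover_exists [m my]] := cover y.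
have fgm : {near y, g m =1 f}.
  apply: filterS (fun z mz => esym (fg m z mz)) _; apply: open_nbhs_nbhs; split => //.
  by case: (clopen_first_cover m).
apply: cvg_trans (near_eq_cvg fgm) _; rewrite (fg _ _ my); exact: cg.
Qed.

End FirstCover.

Section SubspaceSelection.
Context {X : topologicalType} {U : set X} {Y : topologicalType}.
Hypotheses (T1X : accessible_space X) (oU : open U) (T1Y : accessible_space Y).
Hypotheses (clopen_baseY : clopen_base Y) (selX : selective Y X).
Context {phi : Y -> set (set_type U)}.
Hypotheses (phiP : forall y, closed (phi y) /\ phi y !=set0) (lphi : lsc phi).

Lemma subspace_local_selection y0 : exists g : Y -> X, continuous g /\ exists C,
  [/\ clopen C, C y0 & forall y, C y -> exists2 b, phi y b & val b = g y].
Proof.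
have [a phia] := (phiP y0).2.
pose Psi y := if y == y0 then [set val a] else closure (val @` phi y).
have closure_val y b : phi y b -> closure (val @` phi y) (val b).
  by move=> phib; apply: (subset_closure (A := val @` phi y)); exists b.
have Psi_closure y : Psi y `<=` closure (val @` phi y).
  by rewrite /Psi; case: eqP => [-> _ ->|_ //]; exact: closure_val.
have [g [cg gPsi]] : exists g, continuous g /\ forall y, Psi y (g y).
  apply: selX; last first.
    apply: lsc_update_set1 => //; first exact: (closure_val y0 a phia).
    by apply: lsc_closure_image => //; exact: initial_continuous.
  move=> y; rewrite /Psi; case: eqP => _; split.
  - exact: accessible_closed_set1.
  - by exists (val a).
  - exact: closed_closure.
  - by have [_ [b /closure_val]] := phiP y; exists (val b).
have [C [clC Cy0 CgU]] : exists C, [/\ clopen C, C y0 & C `<=` g @^-1` U].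
  apply: clopen_baseY; first exact: open_comp.
  by have := gPsi y0; rewrite /Psi eqxx /= => ->; exact: set_valP.
exists g; split => //; exists C; split => // y Cy.
exists (exist _ (g y) (mem_set (CgU y Cy))) => //.
by apply: closure_val_subspace; [case: (phiP y) | exact/Psi_closure/gPsi].
Qed.

End SubspaceSelection.

Theorem mainTheorem12 (X : topologicalType) (U : set X) :
  @accessible_space X -> open U -> C_selective X ->
  C_selective (set_type U).
Proof.
move=> T1X oU CX Y cY T1Y regY phi phiP lphi.
have [[y0 _]|Y0] := pselect (exists y : Y, True); last first.
  have /choice [f phif] : forall y, exists b, phi y b by move=> y; case: (phiP y).
  by exists f; split => // y; case: Y0; exists y.
have [e eS] := countable_enum y0 cY.
have /choice [g gP] := fun n => subspace_local_selection T1X oU T1Y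
  (countable_regular_clopen_base cY regY) (CX Y cY T1Y regY) phiP lphi (e n).
have /choice [C CP] : forall n, exists C, [/\ clopen C, C (e n) &
    forall y, C y -> exists2 b, phi y b & val b = g n y].
  by move=> n; case: (gP n).
have cover y : exists n, C n y by have [n <-] := eS y; exists n; case: (CP n).
have /choice [f fP] : forall y, exists b,
    phi y b /\ forall m, first_cover C m y -> val b = g m y.
  move=> y; have [n /first_cover_exists [m my]] := cover y.
  have [_ _ /(_ y my.1) [b phib bg]] := CP m.
  by exists b; split => // m' m'y; rewrite (first_cover_uniq _ m'y my).
exists f; split; last by move=> y; case: (fP y).
apply: continuous_comp_initial.
apply: (@continuous_first_cover_glue _ C _ _ g) => // [n|n|m y my].
- by case: (CP n).
- by case: (gP n).
- by case: (fP y) => _ /(_ m my).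
Qed.
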